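(* Let $A$ be a nondegenerate finite quadratic form, and let $Q$ be a fixed finite orthogonal direct sum of copies of $u(2)$ and $v(2)$ such that there exists an embedding $Q\hookrightarrow A$. Then the orthogonal complement $Q^\perp\subset A$ is determined uniquely up to isometry by $A$ and $Q$; that is, for any two embeddings $Q\hookrightarrow A$, the orthogonal complements of the images are isometric finite quadratic forms.
   Context: A finite quadratic form is a finite abelian group $A$ with a quadratic form $q:A\to\mathbb Q/2\mathbb Z$ whose associated bilinear form $b:A\times A\to\mathbb Q/\mathbb Z$ is symmetric bilinear with $q(x+y)=q(x)+q(y)+2b(x,y)$; it is nondegenerate if $b$ is. An embedding is an injective homomorphism preserving $q$, and $Q^\perp$ is the orthogonal complement with respect to $b$. The forms $u(2)$ and $v(2)$ are on $(\mathbb Z/2\mathbb Z)^2$ with Gram matrices $\begin{pmatrix}0&1/2\\1/2&0\end{pmatrix}$ and $\begin{pmatrix}1&1/2\\1/2&1\end{pmatrix}$ respectively, diagonal entries (values of $q$) in $\mathbb Q/2\mathbb Z$ and off-diagonal entries in $\mathbb Q/\mathbb Z$ (they are the discriminant forms of even 2-adic lattices $2^{+2}_{II}$ and $2^{-2}_{II}$, e.g. of $U(2)$ resp. $D_4$). *)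

From HB Require Import structures.
From mathcomp Require Import all_boot all_order all_algebra.
Set Implicit Arguments. Unset Strict Implicit. Unset Printing Implicit Defensive.
Import Order.TTheory GRing.Theory Num.Theory.
Local Open Scope ring_scope.

(* Values of quadratic forms in Q/2Z and bilinear forms in Q/Z are
   represented by rational representatives, compared modulo 2Z resp. Z. *)
Definition eqmodZ (a b : rat) : bool := (a - b) \is a Num.int.
Definition eqmod2Z (a b : rat) : bool := ((a - b) / 2) \is a Num.int.

Definition is_fqf (A : finZmodType) (q : A -> rat) (b : A -> A -> rat) : Prop :=
  [/\ (forall x y, eqmodZ (b x y) (b y x)),
      (forall x y z, eqmodZ (b (x + y) z) (b x z + b y z)),
      (forall x y z, eqmodZ (b x (y + z)) (b x y + b x z)) &
      (forall x y, eqmod2Z (q (x + y)) (q x + q y + 2 * b x y))].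

Definition fqf_nondegenerate (A : finZmodType) (b : A -> A -> rat) : Prop :=
  forall x : A, (forall y : A, eqmodZ (b x y) 0) -> x = 0.

Definition is_embedding (Q A : finZmodType) (qQ : Q -> rat) (qA : A -> rat)
  (f : Q -> A) : Prop :=
  [/\ (forall x y, f (x + y) = f x + f y), injective f &
      (forall x, eqmod2Z (qA (f x)) (qQ x))].

Definition orth_compl (Q A : finZmodType) (b : A -> A -> rat) (f : Q -> A)
  : {set A} :=
  [set x : A | [forall y : Q, eqmodZ (b x (f y)) 0]].

Definition isometric_sub (A : finZmodType) (qA : A -> rat) (P1 P2 : {set A})
  : Prop :=
  exists h : A -> A,
    [/\ {in P1 &, forall x y, h (x + y) = h x + h y},
        {in P1, forall x, h x \in P2},
        {in P1 &, injective h},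
        (forall y, y \in P2 -> exists2 x, x \in P1 & h x = y) &
        {in P1, forall x, eqmod2Z (qA (h x)) (qA x)}].

(* The forms u(2) and v(2) on (Z/2)^2, for a pair (a, c) of elements of Z/2
   (viewed as 0 or 1): Gram matrices [[0,1/2],[1/2,0]] and [[1,1/2],[1/2,1]]
   give q_u2(a,c) = a*c and q_v2(a,c) = a^2 + a*c + c^2 (mod 2). *)
Definition q_u2 (a c : 'Z_2) : rat := ((a : nat) * (c : nat))%:R.
Definition q_v2 (a c : 'Z_2) : rat :=
  ((a : nat) * (a : nat) + (a : nat) * (c : nat) + (c : nat) * (c : nat))%:R.

(* Orthogonal direct sum of copies of u(2) (entry false of s) and v(2)
   (entry true of s): the group ((Z/2)^2)^(size s), realised as matrices
   with one row (a copy of (Z/2)^2) per summand. *)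
Definition sumUV (s : seq bool) : finZmodType := 'M['Z_2]_(size s, 2).

Definition q_sumUV (s : seq bool) (x : sumUV s) : rat :=
  \sum_(i < size s)
    (if nth false s i then q_v2 (x i ord0) (x i ord_max)
     else q_u2 (x i ord0) (x i ord_max)).

(* Induction on the number of summands of Q.  Let t be an isometry of A
   carrying the elements orthogonal to the first m summands of f(Q) onto those
   orthogonal to the first m summands of g(Q).  The images under t and g of the
   two basis vectors of the next summand are four 2-torsion vectors y0, y1, y2,
   y3, all orthogonal to the first m summands of g(Q), and <y0, y1>, <y2, y3>
   are planes of the same type.  For a suitable 4x4 matrix C over F_2, the map
   x |-> x + sum_i (C p(x))_i y_i, where p(x)_j = 2 b(x, y_j) mod 2, is an
   isometry of A sending y0, y1 to y2, y3; as it only adds elements of the span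
   of the y_i, it preserves orthogonality to the first m summands of g(Q).
   Whether C works depends only on the type of the planes and on the four
   pairings 2 b(y_i, y_j) mod 2 with i < 2 <= j, so C is found by a search over
   the 32 configurations. *)

From HB Require Import structures.
From mathcomp Require Import all_boot all_order all_algebra.
From mathcomp Require Import zify ring.
Set Implicit Arguments. Unset Strict Implicit. Unset Printing Implicit Defensive.
Import Order.TTheory GRing.Theory Num.Theory.
Local Open Scope ring_scope.

Lemma eqmodZ_sym a b : eqmodZ a b -> eqmodZ b a.
Proof. by rewrite /eqmodZ -opprB rpredN. Qed.

Lemma eqmodZ_trans a b c : eqmodZ a b -> eqmodZ b c -> eqmodZ a c.
Proof. by rewrite /eqmodZ => hab hbc; have := rpredD hab hbc; rewrite addrA subrK. Qed.

Lemma eqmodZD a b c d : eqmodZ a b -> eqmodZ c d -> eqmodZ (a + c) (b + d).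
Proof. by rewrite /eqmodZ opprD addrACA; apply: rpredD. Qed.

Lemma eqmodZ0_trans a b : eqmodZ a b -> eqmodZ a 0 <-> eqmodZ b 0.
Proof.
by move=> hab; split=> h0; [apply: eqmodZ_trans (eqmodZ_sym hab) h0|apply: eqmodZ_trans hab h0].
Qed.

Lemma eqmod2Z_refl a : eqmod2Z a a.
Proof. by rewrite /eqmod2Z subrr mul0r rpred0. Qed.

Lemma eqmod2Z_sym a b : eqmod2Z a b -> eqmod2Z b a.
Proof. by rewrite /eqmod2Z -opprB mulNr rpredN. Qed.

Lemma eqmod2Z_trans a b c : eqmod2Z a b -> eqmod2Z b c -> eqmod2Z a c.
Proof. by rewrite /eqmod2Z => hab hbc; have := rpredD hab hbc; rewrite -mulrDl addrA subrK. Qed.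

Lemma eqmod2ZD a b c d : eqmod2Z a b -> eqmod2Z c d -> eqmod2Z (a + c) (b + d).
Proof. by rewrite /eqmod2Z => hab hcd; rewrite opprD addrACA mulrDl rpredD. Qed.

Lemma eqmod2ZN a b : eqmod2Z a b -> eqmod2Z (- a) (- b).
Proof. by rewrite /eqmod2Z -opprD mulNr rpredN. Qed.

Lemma eqmod2Z_eqmodZ a b : eqmod2Z a b -> eqmodZ a b.
Proof. by rewrite /eqmod2Z /eqmodZ => /(rpredMn 2); rewrite -mulr_natr mulfVK. Qed.

Lemma eqmod2Z_double a b : eqmod2Z (2 * a) (2 * b) <-> eqmodZ a b.
Proof. by rewrite /eqmod2Z /eqmodZ -mulrBr mulrC mulKf. Qed.

Definition parity (r : rat) : bool := ~~ ((r / 2) \is a Num.int).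

Definition has_parity (r : rat) (c : bool) : Prop := eqmod2Z r c%:R.

Lemma has_parity_nat (c : bool) : has_parity c%:R c.
Proof. exact: eqmod2Z_refl. Qed.

Lemma eqmod2Z_has_parity r r' c : eqmod2Z r r' -> has_parity r' c -> has_parity r c.
Proof. exact: eqmod2Z_trans. Qed.

Lemma has_parityD r r' c c' :
  has_parity r c -> has_parity r' c' -> has_parity (r + r') (c (+) c').
Proof.
move=> h h'; apply: eqmod2Z_trans (eqmod2ZD h h') _.
by case: c {h}; case: c' {h'}; rewrite ?addr0 ?add0r ?eqmod2Z_refl //; apply/eqmod2Z_double.
Qed.

Lemma has_parityN r c : has_parity r c -> has_parity (- r) c.
Proof.
move=> h; apply: eqmod2Z_trans (eqmod2ZN h) _.
by case: c {h}; rewrite ?oppr0 ?eqmod2Z_refl //; apply/eqmod2Z_sym/eqmod2Z_double.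
Qed.

Lemma has_parity_int r c : has_parity r c -> r \is a Num.int.
Proof.
move/eqmod2Z_eqmodZ; rewrite /eqmodZ => h.
by rewrite -[r](subrK c%:R) rpredD // rpred_nat.
Qed.

Lemma int_half_int (n : int) : ((n%:~R : rat) / 2 \is a Num.int) = (2 %| n)%Z.
Proof.
apply/idP/idP => [/intrP [k hk]|/dvdzP [k ->]]; last by rewrite intrM mulfK // intr_int.
have -> : n = (k * 2)%R by apply: (@intr_inj rat); rewrite intrM -hk mulfVK.
by rewrite dvdz_mull.
Qed.

Lemma has_parity_parity r : r \is a Num.int -> has_parity r (parity r).
Proof.
move=> /intrP [m ->]; rewrite /has_parity /eqmod2Z /parity int_half_int.
have [m_even|m_odd] /= := boolP (2 %| m)%Z; first by rewrite subr0 int_half_int.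
by rewrite -[1]/(1%:~R) -intrB int_half_int; lia.
Qed.

Lemma has_parity_eq r c : has_parity r c -> parity r = c.
Proof.
move=> h; have hp := has_parity_parity (has_parity_int h).
have := eqmod2Z_trans (eqmod2Z_sym hp) h; rewrite /eqmod2Z.
have half_nonint : ((1 / 2 : rat) \is a Num.int) = false.
  by rewrite -[1]/(1%:~R : rat) int_half_int.
by case: (parity r) {hp}; case: c {h} => //=; rewrite ?subr0 ?sub0r ?mulNr ?rpredN half_nonint.
Qed.

Lemma has_parity_double_even r : has_parity (2 * r) false -> eqmodZ r 0.
Proof. by rewrite /has_parity /= -[X in eqmod2Z _ X](mulr0 2) => /eqmod2Z_double. Qed.

(** * Finite quadratic forms and their isometries *)

Section FiniteQuadraticForm.
Variables (A : finZmodType) (q : A -> rat) (b : A -> A -> rat).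
Hypothesis hA : is_fqf q b.

Lemma fqf_bC x y : eqmodZ (b x y) (b y x). Proof. by case: hA. Qed.
Lemma fqf_bDl x y z : eqmodZ (b (x + y) z) (b x z + b y z). Proof. by case: hA. Qed.
Lemma fqf_bDr x y z : eqmodZ (b x (y + z)) (b x y + b x z). Proof. by case: hA. Qed.
Lemma fqf_qD x y : eqmod2Z (q (x + y)) (q x + q y + 2 * b x y). Proof. by case: hA. Qed.

Definition orth x z := eqmodZ (b x z) 0.

Lemma orthC x z : orth x z -> orth z x.
Proof. exact: eqmodZ_trans (fqf_bC z x). Qed.

Lemma orthDl x x' z : orth x z -> orth x' z -> orth (x + x') z.
Proof. by move=> h h'; apply: eqmodZ_trans (fqf_bDl x x' z) _; rewrite -[0](addr0 0) eqmodZD. Qed.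

Lemma orthDr x z z' : orth x z -> orth x z' -> orth x (z + z').
Proof. by move=> h h'; apply: eqmodZ_trans (fqf_bDr x z z') _; rewrite -[0](addr0 0) eqmodZD. Qed.

Lemma orth0l z : orth 0 z.
Proof.
have := fqf_bDl 0 0 z; rewrite addr0 /orth /eqmodZ subr0.
by rewrite opprD addrA subrr add0r rpredN.
Qed.

Lemma orth0r x : orth x 0.
Proof. exact/orthC/orth0l. Qed.

Lemma fqf_q0 : eqmod2Z (q 0) 0.
Proof.
have := fqf_qD 0 0; rewrite addr0 /eqmod2Z subr0 => h.
have := rpredD h (orth0l 0); rewrite subr0.
have -> : (q 0 - (q 0 + q 0 + 2 * b 0 0)) / 2 + b 0 0 = - (q 0 / 2) by field.
by rewrite rpredN.
Qed.

Lemma fqf_2b_int x y : y + y = 0 -> 2 * b x y \is a Num.int.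
Proof.
move=> y2; have := fqf_bDr x y y; rewrite y2 /eqmodZ => h.
have := rpredB (orth0r x) h; rewrite subr0.
by have -> : b x 0 - (b x 0 - (b x y + b x y)) = 2 * b x y by ring.
Qed.

Lemma fqf_2bDl x y z : eqmod2Z (2 * b (x + y) z) (2 * b x z + 2 * b y z).
Proof. by rewrite -mulrDr; apply/eqmod2Z_double/fqf_bDl. Qed.

Lemma fqf_2bDr x y z : eqmod2Z (2 * b x (y + z)) (2 * b x y + 2 * b x z).
Proof. by rewrite -mulrDr; apply/eqmod2Z_double/fqf_bDr. Qed.

Lemma fqf_2bC x y : eqmod2Z (2 * b x y) (2 * b y x).
Proof. exact/eqmod2Z_double/fqf_bC. Qed.

Lemma fqf_2b_q x y : eqmod2Z (2 * b x y) (q (x + y) - q x - q y).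
Proof.
have := fqf_qD x y; rewrite /eqmod2Z => h.
have -> : (2 * b x y - (q (x + y) - q x - q y)) / 2 =
  - ((q (x + y) - (q x + q y + 2 * b x y)) / 2) by field.
by rewrite rpredN.
Qed.

(* q (y + y) = 0 forces 2 b(y, y) = -2 q(y), which is even when q(y) is an integer. *)
Lemma fqf_2b_self y : y + y = 0 -> q y \is a Num.int -> has_parity (2 * b y y) false.
Proof.
move=> y2 qy_int; apply: eqmod2Z_trans (fqf_2b_q y y) _.
have := fqf_q0; rewrite y2 /has_parity /eqmod2Z !subr0.
have -> : (q 0 - q y - q y) / 2 = q 0 / 2 - q y by field.
by move=> h; rewrite rpredB.
Qed.

Definition is_isometry (t : A -> A) : Prop :=
  [/\ {morph t : x y / x + y}, injective t & forall x, eqmod2Z (q (t x)) (q x)].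

Lemma isometry0 t : is_isometry t -> t 0 = 0.
Proof. by case=> tD _ _; apply: (addIr (t 0)); rewrite -tD !add0r. Qed.

Lemma isometry_comp t t' : is_isometry t -> is_isometry t' -> is_isometry (t' \o t).
Proof.
case=> tD t_inj tq [t'D t'_inj t'q]; split => [x y /=|x y /t'_inj/t_inj //|x /=].
  by rewrite tD t'D.
exact: eqmod2Z_trans (t'q _) (tq _).
Qed.

Lemma isometry_b t : is_isometry t -> forall x y, eqmodZ (b (t x) (t y)) (b x y).
Proof.
case=> tD _ tq x y; apply/eqmod2Z_double.
apply: eqmod2Z_trans (fqf_2b_q _ _) _; rewrite -tD.
apply: eqmod2Z_trans (eqmod2Z_sym (fqf_2b_q x y)).
by rewrite -!addrA; apply: eqmod2ZD => //; apply: eqmod2ZD; apply: eqmod2ZN.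
Qed.

Lemma isometry_orth t : is_isometry t -> forall x z, orth (t x) (t z) <-> orth x z.
Proof. by move=> ht x z; apply/eqmodZ0_trans/isometry_b. Qed.

End FiniteQuadraticForm.

(** * Vectors and matrices over F_2 of size 4 *)

Record vec4 := Vec4 { c0 : bool; c1 : bool; c2 : bool; c3 : bool }.

Definition vec4_eqb u v :=
  [&& c0 u == c0 v, c1 u == c1 v, c2 u == c2 v & c3 u == c3 v].

Lemma vec4_eqbP : Equality.axiom vec4_eqb.
Proof.
move=> [? ? ? ?] [? ? ? ?]; apply: (iffP and4P) => /= [[]|[-> -> -> ->]] //.
by move=> /eqP-> /eqP-> /eqP-> /eqP->.
Qed.

HB.instance Definition _ := hasDecEq.Build vec4 vec4_eqbP.

Definition all_vec4 : seq vec4 :=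
  let bs := [:: false; true] in
  flatten [seq flatten [seq [seq Vec4 x0 x1 x2 x3 | x2 <- bs, x3 <- bs] | x1 <- bs] | x0 <- bs].

Lemma mem_all_vec4 v : v \in all_vec4.
Proof. by case: v => [[] [] [] []]. Qed.

Definition zerov := Vec4 false false false false.
Definition delta4 (i : nat) := Vec4 (i == 0)%N (i == 1)%N (i == 2)%N (i == 3)%N.
Definition addv u v := Vec4 (c0 u (+) c0 v) (c1 u (+) c1 v) (c2 u (+) c2 v) (c3 u (+) c3 v).
Definition scalev (a : bool) v := Vec4 (a && c0 v) (a && c1 v) (a && c2 v) (a && c3 v).
Definition dotv u v := (c0 u && c0 v) (+) (c1 u && c1 v) (+) (c2 u && c2 v) (+) (c3 u && c3 v).

Record mat4 := Mat4 { col0 : vec4; col1 : vec4; col2 : vec4; col3 : vec4 }.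

Definition mulmv C p :=
  addv (addv (addv (scalev (c0 p) (col0 C)) (scalev (c1 p) (col1 C)))
             (scalev (c2 p) (col2 C))) (scalev (c3 p) (col3 C)).

Section GramMatrix.
Variables (d : bool) (G : nat -> nat -> bool).

Definition gram_row i := Vec4 (G i 0) (G i 1) (G i 2) (G i 3).

Definition gram_col v j :=
  (c0 v && G 0 j) (+) (c1 v && G 1 j) (+) (c2 v && G 2 j) (+) (c3 v && G 3 j).

Definition gram_mul v := Vec4 (gram_col v 0) (gram_col v 1) (gram_col v 2) (gram_col v 3).

(* The quadratic form over F_2 with polar form [G] and value [d] on the basis
   vectors, written in the order in which [q (lincomb y v)] is expanded below. *)
Definition qform v :=
  (c0 v && d)
  (+) (c1 v && d) (+) (c1 v && (c0 v && G 0 1))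
  (+) (c2 v && d) (+) (c2 v && ((c0 v && G 0 2) (+) (c1 v && G 1 2)))
  (+) (c3 v && d) (+) (c3 v && ((c0 v && G 0 3) (+) (c1 v && G 1 3) (+) (c2 v && G 2 3))).

(* Since q (x + l) = q x + q l + 2 b(x, l), the first condition makes
   [transvect C] below preserve [q]; the second one makes its kernel trivial. *)
Definition isometric_mat C :=
  all (fun p => qform (mulmv C p) == dotv (mulmv C p) p) all_vec4 &&
  all (fun p => (gram_mul (mulmv C p) == p) ==> (p == zerov)) all_vec4.

Definition transfer_ok C :=
  [&& isometric_mat C,
      addv (delta4 0) (mulmv C (gram_row 0)) == delta4 2 &
      addv (delta4 1) (mulmv C (gram_row 1)) == delta4 3].

End GramMatrix.

Definition plane_gram (k : vec4) (i j : nat) : bool :=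
  match i, j with
  | 0, 1 | 1, 0 | 2, 3 | 3, 2 => true
  | 0, 2 | 2, 0 => c0 k
  | 0, 3 | 3, 0 => c1 k
  | 1, 2 | 2, 1 => c2 k
  | 1, 3 | 3, 1 => c3 k
  | _, _ => false
  end.

(* Columns 0 and 1 are forced by the two images prescribed in [transfer_ok]. *)
Definition transfer_candidates (k : vec4) : seq mat4 :=
  [seq Mat4 (addv (addv (delta4 1) (delta4 3)) (addv (scalev (c2 k) u) (scalev (c3 k) w)))
            (addv (addv (delta4 0) (delta4 2)) (addv (scalev (c0 k) u) (scalev (c1 k) w)))
            u w
  | u <- all_vec4, w <- all_vec4].

Definition transfer (d : bool) (k : vec4) : mat4 :=
  head (Mat4 zerov zerov zerov zerov)
       [seq C <- transfer_candidates k | transfer_ok d (plane_gram k) C].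

Lemma transfer_okP d k : transfer_ok d (plane_gram k) (transfer d k).
Proof. by case: d; case: k => [[] [] [] []]; vm_compute. Qed.

Definition lincomb (T : zmodType) (w : nat -> T) (v : vec4) : T :=
  w 0%N *+ c0 v + w 1%N *+ c1 v + w 2%N *+ c2 v + w 3%N *+ c3 v.

Lemma addb_interchange4 a b c d a' b' c' d' :
  (a (+) a') (+) (b (+) b') (+) (c (+) c') (+) (d (+) d') =
  (a (+) b (+) c (+) d) (+) (a' (+) b' (+) c' (+) d').
Proof. by case: a; case: b; case: c; case: d; case: a'; case: b'; case: c'; case: d'. Qed.

Lemma mulmvD C p p' : mulmv C (addv p p') = addv (mulmv C p) (mulmv C p').
Proof. by rewrite /mulmv /addv /=; congr Vec4; rewrite !andb_addl addb_interchange4. Qed.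

Lemma mulmv0 C : mulmv C zerov = zerov.
Proof. by case: C => [[? ? ? ?] [? ? ? ?] [? ? ? ?] [? ? ? ?]]. Qed.

Section LinComb.
Variables (T : zmodType) (w : nat -> T).
Hypothesis w_tors : forall i, (i < 4)%N -> w i + w i = 0.

Lemma mulrn_addb (z : T) (a a' : bool) : z + z = 0 -> z *+ (a (+) a') = z *+ a + z *+ a'.
Proof. by move=> z2; case: a; case: a'; rewrite /= ?mulr0n ?mulr1n ?addr0 ?add0r. Qed.

Lemma lincombD u v : lincomb w (addv u v) = lincomb w u + lincomb w v.
Proof.
rewrite /lincomb /= !mulrn_addb ?w_tors //.
by rewrite (addrACA (w 0%N *+ _)) (addrACA (w 0%N *+ _ + _)) (addrACA (w 0%N *+ _ + _ + _)).
Qed.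

Lemma lincomb0 : lincomb w zerov = 0.
Proof. by rewrite /lincomb /= !mulr0n !addr0. Qed.

Lemma lincomb_self v : lincomb w v + lincomb w v = 0.
Proof. by rewrite -lincombD -lincomb0; case: v => [[] [] [] []]. Qed.

Lemma lincomb_delta i : (i < 4)%N -> lincomb w (delta4 i) = w i.
Proof. by case: i => [|[|[|[|]]]] // _; rewrite /lincomb /= !mulr0n ?mulr1n ?addr0 ?add0r. Qed.

Lemma lincomb_closed (P : T -> Prop) v : P 0 -> (forall u u', P u -> P u' -> P (u + u')) ->
  (forall i, (i < 4)%N -> P (w i)) -> P (lincomb w v).
Proof.
move=> P0 PD Pw; have Pwn i (a : bool) : (i < 4)%N -> P (w i *+ a).
  by case: a => lt_i4; rewrite ?mulr1n ?mulr0n //; apply: Pw.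
by rewrite /lincomb; do 3 (apply: (PD); last exact: Pwn); exact: Pwn.
Qed.

End LinComb.

(** * Moving a plane onto another one *)

Section Transvection.
Variables (A : finZmodType) (q : A -> rat) (b : A -> A -> rat).
Hypothesis hA : is_fqf q b.

Lemma has_parity_q_mulrn z (a : bool) c :
  has_parity (q z) c -> has_parity (q (z *+ a)) (a && c).
Proof. by case: a => //= _; rewrite mulr0n; apply: (fqf_q0 hA). Qed.

Lemma has_parity_q_add_mulrn l z (a : bool) cl cz cb :
  has_parity (q l) cl -> has_parity (q z) cz -> has_parity (2 * b l z) cb ->
  has_parity (q (l + z *+ a)) (cl (+) (a && cz) (+) (a && cb)).
Proof.
case: a => /= hl hz hb; last by rewrite mulr0n addr0 !addbF.
by rewrite mulr1n; apply: eqmod2Z_has_parity (fqf_qD hA l z) _; do !apply: has_parityD.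
Qed.

Lemma has_parity_b_mulrnl z (a : bool) w c :
  has_parity (2 * b z w) c -> has_parity (2 * b (z *+ a) w) (a && c).
Proof.
case: a => //= _; rewrite mulr0n /has_parity mulr0n -[X in eqmod2Z _ X](mulr0 2).
by apply/eqmod2Z_double/(orth0l hA).
Qed.

Lemma has_parity_b_mulrnr x z (a : bool) c :
  has_parity (2 * b x z) c -> has_parity (2 * b x (z *+ a)) (a && c).
Proof.
case: a => //= _; rewrite mulr0n /has_parity mulr0n -[X in eqmod2Z _ X](mulr0 2).
by apply/eqmod2Z_double/(orth0r hA).
Qed.

Lemma has_parity_b_add_mulrnl l z (a : bool) w cl cz :
  has_parity (2 * b l w) cl -> has_parity (2 * b z w) cz ->
  has_parity (2 * b (l + z *+ a) w) (cl (+) (a && cz)).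
Proof.
move=> hl hz; apply: eqmod2Z_has_parity (fqf_2bDl hA _ _ _) _.
by apply: has_parityD => //; apply: has_parity_b_mulrnl.
Qed.

Lemma has_parity_b_add_mulrnr x l z (a : bool) cl cz :
  has_parity (2 * b x l) cl -> has_parity (2 * b x z) cz ->
  has_parity (2 * b x (l + z *+ a)) (cl (+) (a && cz)).
Proof.
move=> hl hz; apply: eqmod2Z_has_parity (fqf_2bDr hA _ _ _) _.
by apply: has_parityD => //; apply: has_parity_b_mulrnr.
Qed.

Section FourVectors.
Variables (y : nat -> A) (d : bool) (G : nat -> nat -> bool).
Hypothesis y_tors : forall i, (i < 4)%N -> y i + y i = 0.
Hypothesis q_y : forall i, (i < 4)%N -> has_parity (q (y i)) d.
Hypothesis b_y : forall i j, (i < 4)%N -> (j < 4)%N -> has_parity (2 * b (y i) (y j)) (G i j).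

Local Notation lin := (lincomb y).

Definition pairing x :=
  Vec4 (parity (2 * b x (y 0))) (parity (2 * b x (y 1)))
       (parity (2 * b x (y 2))) (parity (2 * b x (y 3))).

Lemma has_parity_q_lin v : has_parity (q (lin v)) (qform d G v).
Proof.
rewrite /lincomb /qform.
apply: has_parity_q_add_mulrn; [|exact: q_y|].
- apply: has_parity_q_add_mulrn; [|exact: q_y|].
  + apply: has_parity_q_add_mulrn; [exact/has_parity_q_mulrn/q_y|exact: q_y|].
    exact/has_parity_b_mulrnl/b_y.
  + by apply: has_parity_b_add_mulrnl; [apply: has_parity_b_mulrnl|]; apply: b_y.
- by apply: has_parity_b_add_mulrnl; [apply: has_parity_b_add_mulrnl;
    [apply: has_parity_b_mulrnl|]|]; apply: b_y.
Qed.

Lemma has_parity_pairing x j : (j < 4)%N -> has_parity (2 * b x (y j)) (parity (2 * b x (y j))).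
Proof. by move=> lt_j4; apply/has_parity_parity/(fqf_2b_int hA)/y_tors. Qed.

Lemma has_parity_b_lin x v : has_parity (2 * b x (lin v)) (dotv v (pairing x)).
Proof.
rewrite /lincomb /dotv /pairing /=.
by apply: has_parity_b_add_mulrnr; [apply: has_parity_b_add_mulrnr;
  [apply: has_parity_b_add_mulrnr; [apply: has_parity_b_mulrnr|]|]|];
  apply: has_parity_pairing.
Qed.

Lemma pairing_lin v : pairing (lin v) = gram_mul G v.
Proof.
rewrite /pairing /gram_mul /gram_col; congr Vec4; apply: has_parity_eq;
  by apply: has_parity_b_add_mulrnl; [apply: has_parity_b_add_mulrnl;
    [apply: has_parity_b_add_mulrnl; [apply: has_parity_b_mulrnl|]|]|]; apply: b_y.
Qed.

Lemma pairing_y i : (i < 4)%N -> pairing (y i) = gram_row G i.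
Proof. by move=> lt_i4; rewrite /pairing /gram_row; congr Vec4; apply/has_parity_eq/b_y. Qed.

Lemma pairingD x z : pairing (x + z) = addv (pairing x) (pairing z).
Proof.
rewrite /pairing /addv /=; congr Vec4; apply: has_parity_eq;
  by apply: eqmod2Z_has_parity (fqf_2bDl hA _ _ _) _; apply: has_parityD;
  apply: has_parity_pairing.
Qed.

Definition transvect C x := x + lin (mulmv C (pairing x)).

Lemma transvectD C : {morph transvect C : x z / x + z}.
Proof.
by move=> x z; rewrite /transvect pairingD mulmvD lincombD // addrACA.
Qed.

Lemma transvect_inj C : isometric_mat d G C -> injective (transvect C).
Proof.
case/andP=> _ /allP C_inj.
suff ker0 z : transvect C z = 0 -> z = 0.
  move=> x z txz; apply/subr0_eq/ker0.
  by apply: (addIr (transvect C z)); rewrite -transvectD subrK add0r txz.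
rewrite /transvect; set v := mulmv C (pairing z) => tz0.
have z_lin : z = lin v by rewrite -[z]addr0 -(lincomb_self y_tors v) addrA tz0 add0r.
have pz : gram_mul G v == pairing z by rewrite z_lin pairing_lin.
have /eqP pz0 := implyP (C_inj _ (mem_all_vec4 (pairing z))) pz.
by rewrite z_lin /v pz0 mulmv0 lincomb0.
Qed.

Lemma transvect_q C x : isometric_mat d G C -> eqmod2Z (q (transvect C x)) (q x).
Proof.
case/andP=> /allP C_q _; rewrite /transvect; set v := mulmv C (pairing x).
have hv : has_parity (q (lin v) + 2 * b x (lin v)) false.
  have := has_parityD (has_parity_q_lin v) (has_parity_b_lin x v).
  by rewrite (eqP (C_q _ (mem_all_vec4 _))) addbb.
apply: eqmod2Z_trans (fqf_qD hA _ _) _.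
by rewrite -addrA -[X in eqmod2Z _ X]addr0; apply: eqmod2ZD; first exact: eqmod2Z_refl.
Qed.

Lemma transvect_isometry C : isometric_mat d G C -> is_isometry q (transvect C).
Proof.
by move=> iso_C; split; [exact: transvectD|exact: transvect_inj|move=> x; exact: transvect_q].
Qed.

Lemma transvect_y C i : (i < 2)%N ->
  addv (delta4 i) (mulmv C (gram_row G i)) = delta4 i.+2 -> transvect C (y i) = y i.+2.
Proof.
move=> lt_i2 hC; have lt_i4 : (i < 4)%N by apply: ltn_trans lt_i2 _.
by rewrite /transvect pairing_y // -{1}(lincomb_delta y lt_i4) -lincombD // hC lincomb_delta.
Qed.

Lemma transvect_orth C x z : (forall i, (i < 4)%N -> orth b (y i) z) ->
  orth b (transvect C x) z <-> orth b x z.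
Proof.
move=> y_z; have lin_z v : orth b (lin v) z.
  apply: (lincomb_closed (P := fun u => orth b u z)) => // [|u u'].
  - exact: (orth0l hA).
  - exact: (orthDl hA).
rewrite /transvect; split=> [tz|xz]; last exact: (orthDl hA).
by rewrite -[x]addr0 -(lincomb_self y_tors (mulmv C (pairing x))) addrA; apply: (orthDl hA).
Qed.

End FourVectors.

Definition plane_cross (y : nat -> A) : vec4 :=
  Vec4 (parity (2 * b (y 0) (y 2))) (parity (2 * b (y 0) (y 3)))
       (parity (2 * b (y 1) (y 2))) (parity (2 * b (y 1) (y 3))).

Section Planes.
Variables (y : nat -> A) (d : bool).
Hypothesis y_tors : forall i, (i < 4)%N -> y i + y i = 0.
Hypothesis q_y : forall i, (i < 4)%N -> has_parity (q (y i)) d.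
Hypothesis b01 : has_parity (2 * b (y 0) (y 1)) true.
Hypothesis b23 : has_parity (2 * b (y 2) (y 3)) true.

Lemma plane_gram_parity i j : (i < 4)%N -> (j < 4)%N ->
  has_parity (2 * b (y i) (y j)) (plane_gram (plane_cross y) i j).
Proof.
have diag k : (k < 4)%N -> has_parity (2 * b (y k) (y k)) false.
  by move=> lt_k4; apply: (fqf_2b_self hA) (y_tors lt_k4) (has_parity_int (q_y lt_k4)).
have cross k l : (l < 4)%N -> has_parity (2 * b (y k) (y l)) (parity (2 * b (y k) (y l))).
  exact: has_parity_pairing.
have sym k l c : has_parity (2 * b (y l) (y k)) c -> has_parity (2 * b (y k) (y l)) c.
  exact: eqmod2Z_has_parity (fqf_2bC hA _ _).
case: i => [|[|[|[|]]]] //; case: j => [|[|[|[|]]]] // _ _;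
  by first [exact: diag | exact: b01 | exact: b23 | exact: cross
           | apply: sym; first [exact: b01 | exact: b23 | exact: cross]].
Qed.

Lemma plane_transfer : exists2 t, is_isometry q t &
  [/\ t (y 0) = y 2, t (y 1) = y 3 &
      forall x z, (forall i, (i < 4)%N -> orth b (y i) z) -> orth b (t x) z <-> orth b x z].
Proof.
have /and3P [iso_C /eqP C_y0 /eqP C_y1] := transfer_okP d (plane_cross y).
have b_y := plane_gram_parity.
exists (transvect y (transfer d (plane_cross y))).
  exact: (transvect_isometry y_tors q_y b_y iso_C).
split; [exact: (transvect_y y_tors b_y _ C_y0) | exact: (transvect_y y_tors b_y _ C_y1)|].
exact: (transvect_orth y_tors).
Qed.

End Planes.
End Transvection.

(** * Orthogonal sums of copies of u(2) and v(2) *)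

Lemma Z2_cases (c : 'Z_2) : c = 0 \/ c = 1.
Proof. by case: c => [[|[|]]] // ?; [left|right]; apply/val_inj. Qed.

Lemma I2_cases (i : 'I_2) : i = ord0 \/ i = ord_max.
Proof. by case: i => [[|[|]]] // ?; [left|right]; apply/val_inj. Qed.

Section SumUV.
Variable s : seq bool.

Definition q_summand (k : nat) (a c : 'Z_2) : rat :=
  if nth false s k then q_v2 a c else q_u2 a c.

Lemma q_summand00 k : q_summand k 0 0 = 0.
Proof. by rewrite /q_summand /q_v2 /q_u2; case: nth. Qed.

Lemma q_sumUVE (x : sumUV s) :
  q_sumUV x = \sum_(k < size s) q_summand k (x k ord0) (x k ord_max).
Proof. by []. Qed.

Lemma sumUV_tors (x : sumUV s) : x + x = 0.
Proof.
apply/matrixP => k i; rewrite !mxE.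
by case: (Z2_cases (x k i)) => ->; [rewrite addr0|apply/val_inj].
Qed.

Lemma q_sumUV_delta (k : 'I_(size s)) (i : 'I_2) :
  q_sumUV (delta_mx k i : sumUV s) = (nth false s k)%:R.
Proof.
rewrite q_sumUVE (bigD1 k) //= big1 => [|l lk]; last by rewrite !mxE (negbTE lk) q_summand00.
by rewrite !mxE eqxx addr0 /q_summand; case: (I2_cases i) => ->; case: nth.
Qed.

Lemma q_sumUV_plane (k : 'I_(size s)) :
  has_parity (q_sumUV (delta_mx k ord0 + delta_mx k ord_max : sumUV s)) true.
Proof.
rewrite q_sumUVE (bigD1 k) //= big1 => [|l lk]; last by rewrite !mxE (negbTE lk) add0r q_summand00.
rewrite !mxE eqxx addr0 /q_summand.
by case: nth; rewrite /q_v2 /q_u2 /has_parity /eqmod2Z; vm_compute.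
Qed.

Lemma q_sumUV_orth (k k' : 'I_(size s)) (i j : 'I_2) : k != k' ->
  q_sumUV (delta_mx k i + delta_mx k' j : sumUV s) =
  q_sumUV (delta_mx k i : sumUV s) + q_sumUV (delta_mx k' j : sumUV s).
Proof.
move=> kk'; rewrite !q_sumUVE -big_split; apply: eq_bigr => l _; rewrite !mxE.
have [->|lk] := eqVneq l k; rewrite ?(negbTE kk') /= mulr0n ?addr0 ?add0r q_summand00.
  by rewrite addr0.
by rewrite add0r.
Qed.

Variables (A : finZmodType) (q : A -> rat) (b : A -> A -> rat).
Hypothesis hA : is_fqf q b.
Variable h : sumUV s -> A.
Hypothesis hh : is_embedding (@q_sumUV s) q h.

Lemma embeddingD : {morph h : x y / x + y}.
Proof. by case: hh. Qed.

Lemma embedding_q x : eqmod2Z (q (h x)) (q_sumUV x).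
Proof. by case: hh. Qed.

Lemma embedding0 : h 0 = 0.
Proof. by apply: (addIr (h 0)); rewrite -embeddingD !add0r. Qed.

Lemma embedding_tors x : h x + h x = 0.
Proof. by rewrite -embeddingD sumUV_tors embedding0. Qed.

Lemma embedding_q_delta k i : has_parity (q (h (delta_mx k i))) (nth false s k).
Proof.
by apply: eqmod2Z_has_parity (embedding_q _) _; rewrite q_sumUV_delta; apply: has_parity_nat.
Qed.

(* 2 b(h e, h e') is read off from q(h e + h e') - q(h e) - q(h e'). *)
Lemma embedding_b_delta k k' i j c :
  has_parity (q (h (delta_mx k i + delta_mx k' j))) (nth false s k (+) nth false s k' (+) c) ->
  has_parity (2 * b (h (delta_mx k i)) (h (delta_mx k' j))) c.
Proof.
move=> hq; apply: eqmod2Z_has_parity (fqf_2b_q hA _ _) _; rewrite -embeddingD.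
have cancel2 (x x' z : bool) : x (+) x' (+) z (+) x (+) x' = z by case: x; case: x'; case: z.
rewrite -[c](cancel2 (nth false s k) (nth false s k')).
by do 2 (apply: has_parityD; last exact/has_parityN/embedding_q_delta).
Qed.

Lemma embedding_b_plane k :
  has_parity (2 * b (h (delta_mx k ord0)) (h (delta_mx k ord_max))) true.
Proof.
apply: embedding_b_delta; rewrite addbb.
exact: eqmod2Z_has_parity (embedding_q _) (q_sumUV_plane k).
Qed.

Lemma embedding_orth k k' i j : k != k' -> orth b (h (delta_mx k i)) (h (delta_mx k' j)).
Proof.
move=> kk'; apply/has_parity_double_even/embedding_b_delta; rewrite addbF.
apply: eqmod2Z_has_parity (embedding_q _) _.
by rewrite q_sumUV_orth // !q_sumUV_delta; apply: has_parityD; apply: has_parity_nat.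
Qed.

End SumUV.

(** * Induction on the number of summands *)

Section Induction.
Variables (A : finZmodType) (q : A -> rat) (b : A -> A -> rat).
Hypothesis hA : is_fqf q b.
Variable s : seq bool.

Definition orth_first (h : sumUV s -> A) (m : nat) (x : A) : Prop :=
  forall (k : 'I_(size s)) (i : 'I_2), (k < m)%N -> orth b x (h (delta_mx k i)).

Lemma orth_firstS h m x (lt_ms : (m < size s)%N) :
  orth_first h m.+1 x <->
  orth_first h m x /\ forall i, orth b x (h (delta_mx (Ordinal lt_ms) i)).
Proof.
split=> [hx|[hx hmx] k i]; first by split=> [k i /ltnW|i]; apply: hx.
rewrite ltnS leq_eqVlt => /orP [/eqP km|]; last exact: hx.
by have -> : k = Ordinal lt_ms by apply: val_inj.
Qed.

Lemma orth_compl_first h x : is_embedding (@q_sumUV s) q h ->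
  x \in orth_compl b h <-> orth_first h (size s) x.
Proof.
move=> hh; rewrite inE; split=> [/forallP hx k i _|hx]; first exact: hx.
apply/forallP => z; rewrite (matrix_sum_delta z).
have orth_h0 : orth b x (h 0) by rewrite (embedding0 hh); apply: (orth0r hA).
have orth_hD u u' : orth b x (h u) -> orth b x (h u') -> orth b x (h (u + u')).
  by rewrite (embeddingD hh); apply: (orthDr hA).
apply: (big_ind (fun u => orth b x (h u))) => // k _.
apply: (big_ind (fun u => orth b x (h u))) => // i _.
by case: (Z2_cases (z k i)) => ->; rewrite ?scale0r ?scale1r ?hx.
Qed.

Variables (f g : sumUV s -> A).
Hypotheses (hf : is_embedding (@q_sumUV s) q f) (hg : is_embedding (@q_sumUV s) q g).

Lemma orth_first_delta h m (k : 'I_(size s)) (i : 'I_2) :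
  is_embedding (@q_sumUV s) q h -> (m <= k)%N -> orth_first h m (h (delta_mx k i)).
Proof.
move=> hh le_mk k' j lt_k'm; apply: (embedding_orth hA hh).
by apply/eqP => kk'; move: lt_k'm; rewrite -kk' ltnNge le_mk.
Qed.

Section Step.
Variables (m : nat) (lt_ms : (m < size s)%N) (t : A -> A).
Hypothesis t_iso : is_isometry q t.
Hypothesis ht : forall x, orth_first f m x <-> orth_first g m (t x).

Let k := Ordinal lt_ms.
Let y := nth 0 [:: t (f (delta_mx k ord0)); t (f (delta_mx k ord_max));
                   g (delta_mx k ord0); g (delta_mx k ord_max)].

Let y_tors i : (i < 4)%N -> y i + y i = 0.
Proof.
have [tD _ _] := t_iso.
by case: i => [|[|[|[|]]]] // _;
  rewrite /y /= -?tD ?(embedding_tors hf) ?(embedding_tors hg) ?(isometry0 t_iso).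
Qed.

Let q_y i : (i < 4)%N -> has_parity (q (y i)) (nth false s k).
Proof.
have [_ _ tq] := t_iso.
case: i => [|[|[|[|]]]] // _; rewrite /y /=; try exact: (embedding_q_delta hg).
all: exact: eqmod2Z_has_parity (tq _) (embedding_q_delta hf _ _).
Qed.

Let b01 : has_parity (2 * b (y 0) (y 1)) true.
Proof.
apply: eqmod2Z_has_parity (embedding_b_plane hA hf k).
exact/eqmod2Z_double/(isometry_b hA).
Qed.

Let y_first i : (i < 4)%N -> orth_first g m (y i).
Proof.
case: i => [|[|[|[|]]]] // _; rewrite /y /=.
- by apply/ht; exact: (orth_first_delta (k := k) _ hf (leqnn m)).
- by apply/ht; exact: (orth_first_delta (k := k) _ hf (leqnn m)).
- exact: (orth_first_delta (k := k) _ hg (leqnn m)).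
- exact: (orth_first_delta (k := k) _ hg (leqnn m)).
Qed.

Lemma orth_first_isometryS :
  exists2 t', is_isometry q t' & forall x, orth_first f m.+1 x <-> orth_first g m.+1 (t' x).
Proof.
have [tau tau_iso [tau_y0 tau_y1 tau_orth]] :=
  plane_transfer hA y_tors q_y b01 (embedding_b_plane hA hg k).
have tau_first z : orth_first g m (tau z) <-> orth_first g m z.
  split=> hz k' j lt_k'm;
  by apply/(tau_orth z _ (fun i lt_i4 => y_first lt_i4 j lt_k'm)); apply: hz.
have tau_t_f i : tau (t (f (delta_mx k i))) = g (delta_mx k i).
  by case: (I2_cases i) => ->; [exact: tau_y0 | exact: tau_y1].
exists (tau \o t); first exact: isometry_comp.
move=> x; split=> /(orth_firstS _ _ lt_ms) [hx hkx]; apply/(orth_firstS _ _ lt_ms); split.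
- exact/tau_first/ht.
- move=> i; rewrite /= -tau_t_f.
  by apply/(isometry_orth hA tau_iso)/(isometry_orth hA t_iso).
- exact/ht/tau_first.
- move=> i; apply/(isometry_orth hA t_iso)/(isometry_orth hA tau_iso).
  by rewrite tau_t_f.
Qed.

End Step.

Lemma orth_first_isometry m : (m <= size s)%N ->
  exists2 t, is_isometry q t & forall x, orth_first f m x <-> orth_first g m (t x).
Proof.
elim: m => [_|m IH lt_ms].
  by exists id => [|x]; [split=> // x; apply: eqmod2Z_refl | split=> _ k i].
have [t t_iso ht] := IH (ltnW lt_ms).
exact: (orth_first_isometryS lt_ms t_iso ht).
Qed.

End Induction.

Theorem lemma7p6 (A : finZmodType) (qA : A -> rat) (bA : A -> A -> rat)
  (hA : is_fqf qA bA) (hnd : fqf_nondegenerate bA) (s : seq bool)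
  (f g : sumUV s -> A)
  (hf : is_embedding (@q_sumUV s) qA f) (hg : is_embedding (@q_sumUV s) qA g) :
  isometric_sub qA (orth_compl bA f) (orth_compl bA g).
Proof.
have [t [tD t_inj tq] ht] := orth_first_isometry hA hf hg (leqnn (size s)).
have [t' tK t'K] := injF_bij t_inj.
exists t; split=> [x z _ _|x|x z _ _|z|x _].
- exact: tD.
- by move/(orth_compl_first hA _ hf)/ht/(orth_compl_first hA _ hg).
- exact: t_inj.
- move/(orth_compl_first hA _ hg) => gz; exists (t' z); last exact: t'K.
  by apply/(orth_compl_first hA _ hf)/ht; rewrite t'K.
- exact: tq.
Qed.
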